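(* Let $n,k\in\mathbb{N}$ with $0\le k\le\lfloor (n+2)/2\rfloor$. Then there are poset isomorphisms $(\mathcal{A}_k(J([n]\times[2])),\le_k)\cong(\mathcal{A}_k(\mathcal{C}(n+2,2)),\le_k)\cong\mathcal{C}(n+2,2k)$.
   Context: $[n]=\{1,\dots,n\}$; $[n]\times[2]$ has the product order and $J(Q)$ is the poset of order ideals of $Q$ under inclusion. For $k\le m$, $\mathcal{C}(m,k)$ is the set of $k$-element subsets of $[m]$ written as increasing sequences $(x_1<\dots<x_k)$, with $\mathbf{x}\le\mathbf{y}$ iff $x_i\le y_i$ for all $i$. For a finite poset $P$, $\mathcal{A}_k(P)$ is the set of antichains of $P$ of size $k$; for $A,B\in\mathcal{A}_k(P)$, $A\prec_k B$ means $A\setminus B=\{a\}$, $B\setminus A=\{b\}$ are singletons with $a<_P b$, and $\le_k$ is the reflexive transitive closure of $\prec_k$. *)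

From mathcomp Require Import all_boot.
Set Implicit Arguments. Unset Strict Implicit. Unset Printing Implicit Defensive.

Definition poset_iso (T1 T2 : finType) (le1 : rel T1) (le2 : rel T2) : Prop :=
  exists f : T1 -> T2, bijective f /\ forall x y, le1 x y = le2 (f x) (f y).

Definition lt_of (T : finType) (le : rel T) : rel T :=
  fun x y => (x != y) && le x y.

Definition is_antichain (T : finType) (le : rel T) (k : nat) (A : {set T}) : bool :=
  (#|A| == k) && [forall x in A, forall y in A, (x != y) ==> ~~ le x y].

Definition Atype (T : finType) (le : rel T) (k : nat) :=
  {A : {set T} | is_antichain le k A}.

Definition covk (T : finType) (le : rel T) (k : nat) : rel (Atype le k) :=
  fun A B => [exists a : T, exists b : T,
     [&& val A :\: val B == [set a], val B :\: val A == [set b] & lt_of le a b]].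

Definition lek (T : finType) (le : rel T) (k : nat) : rel (Atype le k) :=
  connect (@covk T le k).

(* [n] is modelled as 'I_n (0-based shift, order-isomorphic). *)
Definition Qle (n : nat) : rel ('I_n * 'I_2) :=
  fun x y => (x.1 <= y.1)%N && (x.2 <= y.2)%N.

Definition is_ideal (n : nat) (I : {set 'I_n * 'I_2}) : bool :=
  [forall x, forall y, Qle x y ==> (y \in I) ==> (x \in I)].

Definition Jtype (n : nat) := {I : {set 'I_n * 'I_2} | is_ideal I}.

Definition Jle (n : nat) : rel (Jtype n) := fun I I' => val I \subset val I'.

(* k-element subsets of [m] (modelled as 'I_m), compared via their increasing
   enumerations x_1 < ... < x_k componentwise. *)
Definition Ctype (m k : nat) := {A : {set 'I_m} | #|A| == k}.

Definition sorted_elts (m : nat) (A : {set 'I_m}) : seq nat :=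
  sort leq [seq val x | x <- enum A].

Definition Cle (m k : nat) : rel (Ctype m k) :=
  fun A B => [forall i : 'I_k,
     nth 0 (sorted_elts (val A)) i <= nth 0 (sorted_elts (val B)) i].

From mathcomp Require Import all_boot zify.
Set Implicit Arguments. Unset Strict Implicit. Unset Printing Implicit Defensive.

(* Two 2-subsets {a < b} and {c < d} of [m] are incomparable exactly when they are
   strictly nested (a < c < d < b or c < a < b < d).  An antichain of pairs is thus a
   family of pairwise disjoint nested pairs; it is determined by its union, since its
   outermost pair joins the minimum and the maximum of the union, and conversely every
   2k-subset is such a union.  The order of C(m, j) is the dominance order of the
   counting functions z |-> #{y in S | z <= y}.  A covering step A < B of antichains
   raises the counting function of the union.  Conversely, if the union of A is
   dominated by the union of B but differs from it, let z be the last point where the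
   counting functions differ and x the largest point of the union of A below z; moving
   x to x + 1 is a covering step of antichains that preserves the dominance and raises
   the total weight by one, so iterating it reaches B.  Hence A |-> union A is an
   isomorphism onto C(m, 2k).  Finally, an ideal of [n] x [2] with row lengths a >= b
   corresponds to the pair {b + 1 < a + 2} of [n + 2], which gives
   J([n] x [2]) ~ C(n + 2, 2), and isomorphic posets have isomorphic antichain posets. *)

Lemma inj_surj_bij (T1 : finType) (T2 : eqType) (f : T1 -> T2) :
  injective f -> (forall y, exists x, f x = y) -> bijective f.
Proof.
move=> f_inj f_surj.
have f_surj' y : exists x, f x == y by have [x <-] := f_surj y; exists x.
exists (fun y => xchoose (f_surj' y)) => [x | y]; last exact/eqP/(xchooseP (f_surj' y)).
by apply: f_inj; apply/eqP/(xchooseP (f_surj' (f x))).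
Qed.

Lemma setD_swap1 (T : finType) (A : {set T}) a b : a \in A -> b \notin A ->
  A :\: (b |: (A :\ a)) = [set a] /\ (b |: (A :\ a)) :\: A = [set b].
Proof.
move=> aA bnA; have neq_ab : a != b by apply: contraNneq bnA => <-.
split; apply/setP => c; rewrite !inE.
  have [-> | _] := eqVneq c a; first by rewrite aA (negbTE neq_ab).
  by case: (c \in A); rewrite /= ?orbT ?andbF.
have [-> | neq_cb] := eqVneq c b; first by rewrite (negbTE bnA).
by case: (c \in A); rewrite /= ?andbF.
Qed.

Lemma homo_connect (T1 T2 : finType) (e1 : rel T1) (e2 : rel T2) (F : T1 -> T2) :
  {homo F : x y / e1 x y >-> e2 x y} -> {homo F : x y / connect e1 x y >-> connect e2 x y}.
Proof.
move=> homoF x y /connectP[p path_p ->]; apply/connectP; exists (map F p); last by rewrite last_map.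
by elim: p x path_p => //= z p IH x /andP[/homoF -> /IH].
Qed.

Lemma connect_bij (T1 T2 : finType) (e1 : rel T1) (e2 : rel T2) (F : T1 -> T2) :
  bijective F -> (forall x y, e1 x y = e2 (F x) (F y)) ->
  forall x y, connect e1 x y = connect e2 (F x) (F y).
Proof.
move=> [G FK GK] monoF x y; apply/idP/idP; first by apply: homo_connect => u v; rewrite monoF.
by rewrite -{2}(FK x) -{2}(FK y); apply: homo_connect => u v; rewrite monoF !GK.
Qed.

Lemma is_antichain_imset (T1 T2 : finType) (le1 : rel T1) (le2 : rel T2) k
    (f : T1 -> T2) (A : {set T1}) : injective f ->
  (forall x y, le1 x y = le2 (f x) (f y)) -> is_antichain le1 k A -> is_antichain le2 k (f @: A).
Proof.
move=> f_inj monof /andP[cardA antiA]; apply/andP; split; first by rewrite card_imset.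
apply/forall_inP => _ /imsetP[x xA ->]; apply/forall_inP => _ /imsetP[y yA ->].
rewrite (inj_eq f_inj) -monof.
by move/forall_inP/(_ x xA)/forall_inP/(_ y yA): antiA.
Qed.

Section TransferAntichains.
Variables (T1 T2 : finType) (le1 : rel T1) (le2 : rel T2) (k : nat).

Lemma covk_imset (f : T1 -> T2) (A B : Atype le1 k) (A' B' : Atype le2 k) : bijective f ->
  (forall x y, le1 x y = le2 (f x) (f y)) ->
  val A' = f @: val A -> val B' = f @: val B -> covk A B = covk A' B'.
Proof.
move=> [g fK gK] monof eqA eqB; have f_inj := can_inj fK.
have imsetD (X Y : {set T1}) : f @: (X :\: Y) = f @: X :\: f @: Y.
  by apply/setP => u; rewrite -(gK u) inE !mem_imset // inE.
have imset1 (X : {set T1}) a : (f @: X == [set f a]) = (X == [set a]).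
  by rewrite -imset_set1 (inj_eq (imset_inj f_inj)).
have ltf a b : lt_of le1 a b = lt_of le2 (f a) (f b) by rewrite /lt_of (inj_eq f_inj) monof.
rewrite /covk eqA eqB -!imsetD; apply/existsP/existsP => [[a /existsP[b]] | [a' /existsP[b']]].
  by exists (f a); apply/existsP; exists (f b); rewrite !imset1 -ltf.
by exists (g a'); apply/existsP; exists (g b'); rewrite -!imset1 ltf !gK.
Qed.

Lemma poset_iso_lek : poset_iso le1 le2 -> poset_iso (@lek _ le1 k) (@lek _ le2 k).
Proof.
case=> f [f_bij monof]; have f_inj := bij_inj f_bij.
have [g fK gK] := f_bij; have g_inj := can_inj gK.
have monog u v : le2 u v = le1 (g u) (g v) by rewrite monof !gK.
pose F (A : Atype le1 k) : Atype le2 k :=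
  exist _ (f @: val A) (is_antichain_imset f_inj monof (valP A)).
pose G (B : Atype le2 k) : Atype le1 k :=
  exist _ (g @: val B) (is_antichain_imset g_inj monog (valP B)).
have FK : cancel F G by move=> A; apply: val_inj; rewrite /= -imset_comp (eq_imset _ fK) imset_id.
have GK : cancel G F by move=> B; apply: val_inj; rewrite /= -imset_comp (eq_imset _ gK) imset_id.
have F_bij : bijective F by exists G.
exists F; split=> // A B; apply: connect_bij => // {}A {}B.
exact: (covk_imset (A' := F A) (B' := F B) f_bij monof).
Qed.

End TransferAntichains.

Section SortedElements.
Variable m : nat.
Implicit Types S T : {set 'I_m}.

Lemma sorted_elts_ltn S : sorted ltn (sorted_elts S).
Proof.
rewrite ltn_sorted_uniq_leq sort_uniq sort_sorted ?andbT; last exact: leq_total.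
by rewrite map_inj_uniq ?enum_uniq //; apply: val_inj.
Qed.

Lemma size_sorted_elts S : size (sorted_elts S) = #|S|.
Proof. by rewrite size_sort size_map cardE. Qed.

Lemma mem_sorted_elts S (x : 'I_m) : (val x \in sorted_elts S) = (x \in S).
Proof. by rewrite /sorted_elts mem_sort (mem_map val_inj) mem_enum. Qed.

Lemma sorted_elts_bound S v : v \in sorted_elts S -> v < m.
Proof. by rewrite /sorted_elts mem_sort => /mapP[x _ ->]; apply: ltn_ord. Qed.

Lemma sorted_eltsE S s : sorted ltn s -> all (fun v => v < m) s ->
  (forall x : 'I_m, (val x \in s) = (x \in S)) -> sorted_elts S = s.
Proof.
move=> s_ltn s_bound memS.
have s_uniq : uniq s by apply: sorted_uniq s_ltn; [apply: ltn_trans | apply: ltnn].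
have perm_s : perm_eq [seq val x | x <- enum S] s.
  apply: uniq_perm s_uniq _ => [|v]; first by rewrite map_inj_uniq ?enum_uniq //; apply: val_inj.
  apply/mapP/idP => [[x] | vs]; first by rewrite mem_enum -memS => xS ->.
  have vm : v < m by apply: (allP s_bound).
  by exists (Ordinal vm); rewrite ?mem_enum -?memS.
rewrite /sorted_elts (perm_sortP leq_total leq_trans anti_leq _ _ perm_s).
rewrite sorted_sort //; first exact: leq_trans.
by move: s_ltn; rewrite ltn_sorted_uniq_leq => /andP[].
Qed.

Definition upcount (z : nat) S : nat := \sum_(y in S) (z <= y).

Lemma upcount_count z S : upcount z S = count (leq z) (sorted_elts S).
Proof.
rewrite /upcount -big_enum /= -(big_map val xpredT (fun v => nat_of_bool (z <= v))).
rewrite (perm_big (sorted_elts S)); last by rewrite perm_sym perm_sort.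
rewrite -sum1_count [in RHS]big_mkcond /=.
by apply: eq_bigr => v _; case: (z <= v).
Qed.

End SortedElements.

Lemma count_nth_iota (s : seq nat) (a : pred nat) :
  count a s = count (fun i => a (nth 0 s i)) (iota 0 (size s)).
Proof. by rewrite -[s in count _ s](mkseq_nth 0) /mkseq count_map. Qed.

Lemma count_geq_nth (s : seq nat) i : sorted leq s -> i < size s ->
  size s - i <= count (leq (nth 0 s i)) s.
Proof.
move=> s_leq lt_i; rewrite count_nth_iota.
rewrite -[X in iota _ X](subnKC (ltnW lt_i)) iotaD count_cat add0n.
apply: leq_trans (leq_addl _ _).
rewrite (eq_in_count (a2 := predT)) ?count_predT ?size_iota // => j.
rewrite mem_iota => /andP[le_ij lt_j].
by apply: (sorted_leq_nth leq_trans leqnn 0 s_leq); rewrite ?inE //; lia.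
Qed.

Lemma count_geq_gt_nth (t : seq nat) i z : sorted leq t -> i < size t ->
  nth 0 t i < z -> count (leq z) t <= size t - i.+1.
Proof.
move=> t_leq lt_i lt_z; rewrite count_nth_iota.
rewrite -[X in iota _ X](subnKC lt_i) iotaD count_cat add0n.
have -> : count (fun j => z <= nth 0 t j) (iota 0 i.+1) = 0.
  apply/eqP; rewrite -leqn0 leqNgt -has_count; apply/hasP => -[j].
  rewrite mem_iota add0n => /andP[_ le_ji] /=; rewrite leqNgt => /negP; apply.
  apply: leq_ltn_trans lt_z; apply: (sorted_leq_nth leq_trans leqnn 0 t_leq); rewrite ?inE; lia.
by rewrite add0n (leq_trans (count_size _ _)) ?size_iota.
Qed.

Lemma sorted_nth_leqE (s t : seq nat) :
  sorted leq s -> sorted leq t -> size s = size t ->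
  (forall i, i < size s -> nth 0 s i <= nth 0 t i) <->
  (forall z, count (leq z) s <= count (leq z) t).
Proof.
move=> s_leq t_leq eq_size; split=> [le_st z | le_count i lt_i].
  rewrite (count_nth_iota s) (count_nth_iota t) -eq_size.
  apply: sub_count => i /= le_zs.
  case: (ltnP i (size s)) => [lt_i | ge_i]; first exact: leq_trans le_zs (le_st i lt_i).
  by move: le_zs; rewrite nth_default // leqn0 => /eqP ->.
rewrite leqNgt; apply/negP => lt_ts.
have lt_it : i < size t by rewrite -eq_size.
have := leq_trans (count_geq_nth s_leq lt_i) (le_count (nth 0 s i)).
have := count_geq_gt_nth t_leq lt_it lt_ts.
rewrite -eq_size; lia.
Qed.

Section Pairs.
Variable m : nat.
Notation C2 := (Ctype m 2).
Implicit Types P Q : C2.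

Definition lo P := nth 0 (sorted_elts (val P)) 0.
Definition hi P := nth 0 (sorted_elts (val P)) 1.

Lemma sorted_elts_pair P : sorted_elts (val P) = [:: lo P; hi P].
Proof.
have := size_sorted_elts (val P); rewrite (eqP (valP P)) /lo /hi.
by case: (sorted_elts _) => [|a [|b [|c s]]].
Qed.

Lemma lo_lt_hi P : lo P < hi P.
Proof. by have := sorted_elts_ltn (val P); rewrite sorted_elts_pair /= andbT. Qed.

Lemma hi_bound P : hi P < m.
Proof. by apply: (@sorted_elts_bound _ (val P)); rewrite sorted_elts_pair !inE eqxx orbT. Qed.

Lemma lo_bound P : lo P < m.
Proof. exact: ltn_trans (lo_lt_hi P) (hi_bound P). Qed.

Definition lo_ord P : 'I_m := Ordinal (lo_bound P).
Definition hi_ord P : 'I_m := Ordinal (hi_bound P).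

Lemma mem_pair P (x : 'I_m) : (x \in val P) = (val x == lo P) || (val x == hi P).
Proof. by rewrite -mem_sorted_elts sorted_elts_pair !inE. Qed.

Lemma lo_ord_in P : lo_ord P \in val P.
Proof. by rewrite mem_pair eqxx. Qed.

Lemma hi_ord_in P : hi_ord P \in val P.
Proof. by rewrite mem_pair eqxx orbT. Qed.

Lemma lohi_inj P Q : lo P = lo Q -> hi P = hi Q -> P = Q.
Proof. by move=> eq_lo eq_hi; apply/val_inj/setP => x; rewrite !mem_pair eq_lo eq_hi. Qed.

Lemma Cle_pair P Q : Cle P Q = (lo P <= lo Q) && (hi P <= hi Q).
Proof.
apply/forallP/andP => [le_PQ | [le_lo le_hi] [[|[|i]] //]].
by split; [apply: (le_PQ ord0) | apply: (le_PQ ord_max)].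
Qed.

Lemma card_set2_neq (a b : 'I_m) : a != b -> #|[set a; b]| == 2.
Proof. by move=> neq_ab; rewrite cards2 neq_ab. Qed.

Definition mkpair (a b : 'I_m) (neq_ab : a != b) : C2 :=
  exist _ [set a; b] (card_set2_neq neq_ab).

Lemma lohi_mkpair (a b : 'I_m) (neq_ab : a != b) :
  lo (mkpair neq_ab) = minn a b /\ hi (mkpair neq_ab) = maxn a b.
Proof.
have neq_val : nat_of_ord a <> b by move/val_inj/eqP; rewrite (negbTE neq_ab).
suff : sorted_elts (val (mkpair neq_ab)) = [:: minn a b; maxn a b].
  by rewrite sorted_elts_pair => -[-> ->].
apply: sorted_eltsE => [||x]; first by rewrite /= andbT; lia.
  by rewrite /= andbT gtn_max !ltn_ord andbT; have := ltn_ord a; lia.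
rewrite !inE -!(inj_eq val_inj) /=.
by case: (ltngtP a b) => [||/val_inj/eqP]; rewrite ?(negbTE neq_ab) // orbC.
Qed.

Lemma pair_set P : val P = [set lo_ord P; hi_ord P].
Proof. by apply/setP => x; rewrite mem_pair !inE -!(inj_eq val_inj). Qed.

Lemma pair_other P (x : 'I_m) : x \in val P -> exists2 y : 'I_m, y != x & val P = [set x; y].
Proof.
have lt_lohi := lo_lt_hi P; rewrite pair_set !inE => /orP[] /eqP ->.
  by exists (hi_ord P); rewrite // -val_eqE /= neq_ltn lt_lohi orbT.
by exists (lo_ord P); rewrite 1?setUC // -val_eqE /= neq_ltn lt_lohi.
Qed.

Lemma lohi_set2 P (x y : 'I_m) (neq_xy : x != y) : val P = [set x; y] ->
  lo P = minn x y /\ hi P = maxn x y.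
Proof.
move=> eq_P; have -> : P = mkpair neq_xy by apply: val_inj; rewrite eq_P.
exact: lohi_mkpair.
Qed.

End Pairs.

Section PairAntichains.
Variable m : nat.
Notation C2 := (Ctype m 2).
Implicit Types (P Q R : C2) (A B : {set C2}).

Definition antichain A := [forall P in A, forall Q in A, (P != Q) ==> ~~ Cle P Q].

Definition nested P Q := lo P < lo Q /\ hi Q < hi P.

Definition points A := \bigcup_(P in A) val P.

Lemma antichainP A :
  reflect (forall P Q, P \in A -> Q \in A -> P != Q -> ~~ Cle P Q) (antichain A).
Proof.
apply: (iffP idP) => [anti P Q PA QA | anti].
  by move/forall_inP/(_ P PA)/forall_inP/(_ Q QA)/implyP: anti.
by apply/forall_inP => P PA; apply/forall_inP => Q QA; apply/implyP; apply: anti.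
Qed.

Lemma antichain_nested A P Q : antichain A -> P \in A -> Q \in A -> P != Q ->
  nested P Q \/ nested Q P.
Proof.
move=> /antichainP anti PA QA neq_PQ.
have := anti _ _ PA QA neq_PQ; have := anti _ _ QA PA; rewrite eq_sym => /(_ neq_PQ).
by rewrite /nested !Cle_pair; lia.
Qed.

Lemma antichainS A B : B \subset A -> antichain A -> antichain B.
Proof.
move=> sBA /antichainP anti; apply/antichainP => P Q /(subsetP sBA) PA /(subsetP sBA).
exact: anti.
Qed.

Lemma antichainU1 A P : antichain A ->
  (forall R, R \in A -> ~~ Cle P R && ~~ Cle R P) -> antichain (P |: A).
Proof.
move=> anti incomp; apply/antichainP => Q R.
rewrite !in_setU1 => /predU1P[-> | QA] /predU1P[-> | RA]; rewrite ?eqxx //.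
- by case/andP: (incomp R RA).
- by case/andP: (incomp Q QA).
- exact: (antichainP _ anti).
Qed.

Lemma mem_points A P x : P \in A -> x \in val P -> x \in points A.
Proof. by move=> PA xP; apply/bigcupP; exists P. Qed.

Lemma points0 : points set0 = set0.
Proof. by rewrite /points big_set0. Qed.

Lemma pointsU1 A P : points (P |: A) = val P :|: points A.
Proof. by rewrite /points bigcup_setU big_set1. Qed.

Lemma antichain_disjoint A P Q : antichain A -> P \in A -> Q \in A -> P != Q ->
  [disjoint val P & val Q].
Proof.
move=> anti PA QA neq_PQ; have := antichain_nested anti PA QA neq_PQ.
have := lo_lt_hi P; have := lo_lt_hi Q => ltQ ltP nest.
by apply/pred0P => x /=; rewrite !mem_pair; apply/negP; rewrite /nested in nest; lia.
Qed.

Lemma pointsD1 A P : antichain A -> P \in A -> points (A :\ P) = points A :\: val P.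
Proof.
move=> anti PA; apply/setP => x; rewrite inE; apply/bigcupP/andP.
  case=> Q /setD1P[neq_QP QA] xQ; split; last exact: mem_points QA xQ.
  by rewrite (disjointFr (antichain_disjoint anti QA PA neq_QP) xQ).
case=> xNP /bigcupP[Q QA xQ]; exists Q => //; apply/setD1P; split=> //.
by apply: contraNneq xNP => <-.
Qed.

Lemma points_split A P : antichain A -> P \in A ->
  points A = val P :|: points (A :\ P) /\ [disjoint val P & points (A :\ P)].
Proof.
move=> anti PA; split; first by rewrite -pointsU1 setD1K.
rewrite pointsD1 //; apply/pred0P => x /=; rewrite inE.
by case: (x \in val P); rewrite ?andbF.
Qed.

Lemma card_points A : antichain A -> #|points A| = 2 * #|A|.
Proof.
have [k cardA] : exists k, #|A| = k by exists #|A|.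
elim: k A cardA => [|k IH] A cardA anti.
  by rewrite (cards0_eq cardA) points0 !cards0.
have [P PA] : exists P, P \in A by apply/set0Pn; rewrite -card_gt0 cardA.
have [-> disj] := points_split anti PA.
have cardAP : #|A :\ P| = k by move: cardA; rewrite (cardsD1 P) PA => -[].
rewrite cardsU (disjoint_setI0 disj) cards0 subn0 (eqP (valP P)) IH //.
  by rewrite cardA cardAP mulnS.
exact: antichainS (subsetDl _ _) anti.
Qed.

Definition outermost A P := forall Q, Q \in A -> Q != P -> nested P Q.

Lemma exists_outermost A P0 : antichain A -> P0 \in A -> exists2 P, P \in A & outermost A P.
Proof.
move=> anti P0A.
have [P PA maxP] := @arg_maxnP _ P0 (mem A) (fun P => hi P - lo P) P0A.
exists P => // Q QA neq_QP; rewrite eq_sym in neq_QP.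
have := maxP Q QA; have := lo_lt_hi P; have := lo_lt_hi Q.
by case: (antichain_nested anti PA QA neq_QP); rewrite /nested; lia.
Qed.

Lemma outermost_bound A P x : P \in A -> outermost A P ->
  x \in points A -> lo P <= x <= hi P.
Proof.
move=> PA outP /bigcupP[Q QA]; have := lo_lt_hi P; have := lo_lt_hi Q.
rewrite mem_pair => ? ? /orP[] /eqP ->;
  have [-> | /(outP Q QA)] := eqVneq Q P; rewrite /nested; lia.
Qed.

Lemma outermost_uniq A B P Q : P \in A -> outermost A P -> Q \in B -> outermost B Q ->
  points A = points B -> P = Q.
Proof.
move=> PA outP QB outQ eq_pts.
have boundP x : x \in points B -> lo P <= x <= hi P by rewrite -eq_pts; apply: outermost_bound.
have boundQ x : x \in points A -> lo Q <= x <= hi Q by rewrite eq_pts; apply: outermost_bound.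
have := boundP _ (mem_points QB (lo_ord_in Q)); have := boundP _ (mem_points QB (hi_ord_in Q)).
have := boundQ _ (mem_points PA (lo_ord_in P)); have := boundQ _ (mem_points PA (hi_ord_in P)).
by rewrite /= => *; apply: lohi_inj; lia.
Qed.

Lemma points_inj A B : antichain A -> antichain B -> points A = points B -> A = B.
Proof.
have [k cardA] : exists k, #|A| = k by exists #|A|.
elim: k A B cardA => [|k IH] A B cardA antiA antiB eq_pts.
  rewrite (cards0_eq cardA) points0 in eq_pts *; apply/esym/setP => Q; rewrite inE.
  by apply/negP => QB; have := mem_points QB (lo_ord_in Q); rewrite -eq_pts inE.
have [P0 P0A] : exists P, P \in A by apply/set0Pn; rewrite -card_gt0 cardA.
have [P PA outP] := exists_outermost antiA P0A.
have /bigcupP[Q0 Q0B _] : lo_ord P \in points B.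
  by rewrite -eq_pts (mem_points PA (lo_ord_in P)).
have [Q QB outQ] := exists_outermost antiB Q0B.
have eq_PQ := outermost_uniq PA outP QB outQ eq_pts; subst Q.
rewrite -(setD1K PA) -(setD1K QB); congr (_ |: _); apply: IH.
- by move: cardA; rewrite (cardsD1 P) PA => -[].
- exact: antichainS (subsetDl _ _) antiA.
- exact: antichainS (subsetDl _ _) antiB.
- by rewrite !pointsD1 // eq_pts.
Qed.

Lemma antichain_add_outer A (a b : 'I_m) (neq_ab : a != b) : antichain A ->
  (forall x, x \in points A -> minn a b < x < maxn a b) -> antichain (mkpair neq_ab |: A).
Proof.
move=> anti inside; apply: antichainU1 => // R RA.
have := inside _ (mem_points RA (lo_ord_in R)); have := inside _ (mem_points RA (hi_ord_in R)).
rewrite !Cle_pair; have [-> ->] := lohi_mkpair neq_ab; rewrite /=; lia.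
Qed.

Lemma points_surj k (S : {set 'I_m}) : #|S| = 2 * k ->
  exists A, [/\ antichain A, #|A| = k & points A = S].
Proof.
elim: k S => [|k IH] S cardS.
  exists set0; rewrite cards0 points0 (cards0_eq cardS); split=> //.
  by apply/antichainP => P Q; rewrite inE.
have [x0 x0S] : exists x, x \in S by apply/set0Pn; rewrite -card_gt0 cardS.
have [a aS min_a] := @arg_minnP _ x0 (fun x => x \in S) (@nat_of_ord m) x0S.
have [b bS max_b] := @arg_maxnP _ x0 (fun x => x \in S) (@nat_of_ord m) x0S.
pose S' := S :\ a :\ b.
have inside x : x \in S' -> a < x < b.
  rewrite !inE -!val_eqE /= => /and3P[? ? xS].
  by have := min_a x xS; have := max_b x xS; lia.
have neq_ab : a != b.
  apply/eqP => eq_ab; have : S \subset [set a].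
    apply/subsetP => x xS; rewrite inE -val_eqE /=.
    by have := min_a x xS; have := max_b x xS; rewrite eq_ab; lia.
  by move/subset_leq_card; rewrite cards1 cardS; lia.
have lt_ab : a < b.
  by have := min_a b bS; move: neq_ab; rewrite -val_eqE /=; lia.
have cardS' : #|S'| = 2 * k.
  move: cardS; rewrite /S' (cardsD1 a) (cardsD1 b (S :\ a)) aS !inE eq_sym neq_ab bS /=; lia.
have [A [antiA cardA ptsA]] := IH S' cardS'.
have PnA : mkpair neq_ab \notin A.
  apply/negP => PA; have := mem_points PA (lo_ord_in _); rewrite ptsA => /inside /=.
  by have [-> _] := lohi_mkpair neq_ab; lia.
exists (mkpair neq_ab |: A); split.
- apply: antichain_add_outer => // x; rewrite ptsA => /inside; lia.
- by rewrite cardsU1 PnA cardA.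
- rewrite pointsU1 ptsA; apply/setP => x; rewrite !inE.
  case: (x =P a) => [-> | _]; first by rewrite aS.
  by case: (x =P b) => [-> | _]; rewrite ?bS ?orbT.
Qed.

End PairAntichains.

Section Upcount.
Variable m : nat.
Implicit Types S T : {set 'I_m}.

Lemma upcountU z S T : [disjoint S & T] -> upcount z (S :|: T) = upcount z S + upcount z T.
Proof. by move=> disj; rewrite /upcount -bigU //; apply: eq_bigl => y; rewrite inE. Qed.

Lemma upcount_pair z (P : Ctype m 2) : upcount z (val P) = (z <= lo P) + (z <= hi P).
Proof. by rewrite upcount_count sorted_elts_pair /= addn0. Qed.

Lemma upcount_le_card z S : upcount z S <= #|S|.
Proof. by rewrite -sum1_card; apply: leq_sum => y _; case: (z <= y). Qed.

Lemma upcount_card z S : {in S, forall y : 'I_m, z <= y} -> upcount z S = #|S|.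
Proof. by move=> ge_z; rewrite -sum1_card; apply: eq_bigr => y /ge_z ->. Qed.

Lemma upcount_out z S : m <= z -> upcount z S = 0.
Proof. by move=> le_mz; apply: big1 => y _; rewrite leqNgt (leq_trans (ltn_ord y) le_mz). Qed.

Lemma upcount_antimono z1 z2 S : z1 <= z2 -> upcount z2 S <= upcount z1 S.
Proof. by move=> le_z; apply: leq_sum => y _; case: (leqP z2 y) => // /(leq_trans le_z) ->. Qed.

Lemma upcount_succ (x : 'I_m) S : upcount x S = (x \in S) + upcount x.+1 S.
Proof.
rewrite /upcount; case xS: (x \in S).
  rewrite (big_setD1 _ xS) [in RHS](big_setD1 _ xS) /= leqnn ltnn add1n add0n; congr _.+1.
  by apply: eq_bigr => y /setD1P[neq_yx _]; rewrite leq_eqVlt eq_sym val_eqE (negbTE neq_yx).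
rewrite add0n; apply: eq_bigr => y yS; rewrite leq_eqVlt eq_sym val_eqE.
by case: eqP yS xS => [-> -> | ].
Qed.

Lemma upcount_inj S T : (forall z, z < m -> upcount z S = upcount z T) -> S = T.
Proof.
move=> eq_up; apply/setP => x.
have eq_succ : upcount x.+1 S = upcount x.+1 T.
  by case: (ltnP x.+1 m) => [/eq_up // | le_m]; rewrite !upcount_out.
have := eq_up x (ltn_ord x); rewrite !upcount_succ eq_succ => /addIn.
by case: (x \in S); case: (x \in T).
Qed.

Lemma upcount_raise w S (x x' : 'I_m) : x \in S -> x' \notin S -> x' = x.+1 :> nat ->
  upcount w (x' |: (S :\ x)) = upcount w S + (w == x.+1).
Proof.
move=> xS x'S eq_x'.
have x'Sx : x' \notin S :\ x by rewrite inE negb_and x'S orbT.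
rewrite /upcount big_setU1 //= [in RHS](big_setD1 _ xS) /= eq_x'.
by rewrite leq_eqVlt ltnS; case: eqP => [-> | _] /=; rewrite ?ltnn ?addn0 // add0n addnC.
Qed.

Lemma Cle_upcount j (S T : Ctype m j) :
  Cle S T <-> forall z, upcount z (val S) <= upcount z (val T).
Proof.
have size_S : size (sorted_elts (val S)) = j by rewrite size_sorted_elts (eqP (valP S)).
have size_T : size (sorted_elts (val T)) = j by rewrite size_sorted_elts (eqP (valP T)).
have leq_sorted (U : Ctype m j) : sorted leq (sorted_elts (val U)).
  by have := sorted_elts_ltn (val U); rewrite ltn_sorted_uniq_leq => /andP[].
have := sorted_nth_leqE (leq_sorted S) (leq_sorted T) (etrans size_S (esym size_T)).
rewrite size_S => eqv; rewrite /Cle; split=> [/forallP le_ST | le_up].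
  move=> z; rewrite !upcount_count; apply: (eqv.1 _ z) => i lt_ij.
  exact: (le_ST (Ordinal lt_ij)).
apply/forallP => i; apply: (eqv.2 _ i (ltn_ord i)) => z.
by rewrite -!upcount_count.
Qed.

Definition weight S := \sum_(z < m) upcount z S.

Lemma leq_weight S T : (forall z, upcount z S <= upcount z T) -> weight S <= weight T.
Proof. by move=> le_up; apply: leq_sum => z _. Qed.

Lemma weight_raise S (x x' : 'I_m) : x \in S -> x' \notin S -> x' = x.+1 :> nat ->
  weight (x' |: (S :\ x)) = (weight S).+1.
Proof.
move=> xS x'S eq_x'.
have sum_indicator : \sum_(w < m) (nat_of_ord w == x.+1) = 1.
  rewrite (bigD1 x') //= -eq_x' eqxx big1 // => w neq_wx'.
  by rewrite -val_eqE in neq_wx'; rewrite (negbTE neq_wx').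
rewrite /weight; under eq_bigr => w _ do rewrite (upcount_raise w xS x'S eq_x').
by rewrite big_split /= sum_indicator addn1.
Qed.

End Upcount.

Section Raise.
Variable m : nat.
Implicit Types S T : {set 'I_m}.

Lemma upcount_gap z1 z2 S : z1 <= z2 ->
  (forall y : 'I_m, y \in S -> (y < z1) || (z2 <= y)) -> upcount z1 S = upcount z2 S.
Proof.
move=> le_z gap; apply: eq_bigr => y /gap /orP[lt_y | le_y].
  by rewrite leqNgt lt_y leqNgt (leq_trans lt_y le_z).
by rewrite le_y (leq_trans le_z le_y).
Qed.

Lemma exists_last_deficit S T : (forall z, upcount z S <= upcount z T) -> S != T ->
  exists z : 'I_m, [/\ z \notin S, upcount z S < upcount z T &
    forall w, z < w -> upcount w S = upcount w T].
Proof.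
move=> le_up neq_ST.
have [z0 lt_z0] : exists z, upcount z S < upcount z T.
  case/boolP: [exists z : 'I_m, upcount z S < upcount z T] => [/existsP[z lt_z] | /existsPn none].
    by exists z.
  case/eqP: neq_ST; apply: upcount_inj => z lt_zm; apply/eqP.
  by rewrite eqn_leq le_up leqNgt (none (Ordinal lt_zm)).
have bounded z : upcount z S < upcount z T -> z <= m.
  by case: (leqP z m) => // /ltnW le_mz; rewrite !upcount_out.
have [z lt_z max_z] := ex_maxnP (ex_intro _ z0 lt_z0) bounded.
have lt_zm : z < m by case: (ltnP z m) lt_z => // le_mz; rewrite !upcount_out.
have eq_after w : z < w -> upcount w S = upcount w T.
  move=> lt_zw; apply/eqP; rewrite eqn_leq le_up leqNgt /=.
  by apply/negP => /max_z; rewrite leqNgt lt_zw.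
pose z' : 'I_m := Ordinal lt_zm.
exists z'; split=> //.
move: lt_z; rewrite (upcount_succ z' S) (upcount_succ z' T) eq_after // ltn_add2r.
by case: (z' \in S); case: (z' \in T).
Qed.

Lemma exists_raise S T : #|S| = #|T| -> (forall z, upcount z S <= upcount z T) -> S != T ->
  exists x x' : 'I_m, [/\ x \in S, x' \notin S, x' = x.+1 :> nat &
    forall w, upcount w (x' |: (S :\ x)) <= upcount w T].
Proof.
move=> eq_card le_up neq_ST.
have [z [zS lt_z eq_after]] := exists_last_deficit le_up neq_ST.
have [y0 y0S] : exists y : 'I_m, (y \in S) && (y < z).
  apply/existsP; move: lt_z; apply: contraLR => /existsPn below_z.
  have -> : upcount z S = #|S|.
    by apply: upcount_card => y yS; have := below_z y; rewrite yS /= -leqNgt.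
  by rewrite -leqNgt eq_card upcount_le_card.
have [x /andP[xS lt_xz] max_x] :=
  @arg_maxnP _ y0 (fun y => (y \in S) && (y < z)) (@nat_of_ord m) y0S.
have lt_x1m : x.+1 < m by apply: leq_ltn_trans lt_xz (ltn_ord z).
pose x' : 'I_m := Ordinal lt_x1m.
have gap y : y \in S -> (y < x.+1) || (z <= y).
  move=> yS; case: (ltnP y z) => [lt_yz | _]; rewrite ?orbT // orbF.
  by rewrite ltnS; apply: max_x; rewrite yS lt_yz.
have x'S : x' \notin S.
  apply: contraNN zS => x'S; have := gap x' x'S; rewrite /= ltnn /= => le_zx.
  by have -> : z = x' by apply: val_inj => /=; lia.
exists x, x'; split=> // w.
rewrite (upcount_raise w xS x'S erefl); case: eqP => [-> | _]; last by rewrite addn0.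
rewrite (upcount_gap lt_xz gap) addn1.
exact: leq_trans lt_z (upcount_antimono _ lt_xz).
Qed.

End Raise.

Section CoverSteps.
Variable m : nat.
Notation C2 := (Ctype m 2).
Implicit Types (P Q R : C2) (A B : {set C2}).

Lemma upcount_swap_le z A B P Q : antichain A -> antichain B -> P \in A -> Q \in B ->
  A :\ P = B :\ Q -> Cle P Q -> upcount z (points A) <= upcount z (points B).
Proof.
move=> antiA antiB PA QB eq_rest; rewrite Cle_pair => /andP[le_lo le_hi].
have [-> disjA] := points_split antiA PA; have [-> disjB] := points_split antiB QB.
rewrite !upcountU // !upcount_pair eq_rest leq_add2r.
have le_indicator a b : a <= b -> (z <= a) <= (z <= b).
  by case: (leqP z a) => // /leq_trans h /h ->.
by rewrite leq_add ?le_indicator.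
Qed.

Lemma raise_pair_incomparable A P R (x y x' : 'I_m) (neq_x'y : x' != y) :
  antichain A -> P \in A -> R \in A -> R != P -> x != y -> val P = [set x; y] ->
  x' = x.+1 :> nat -> x' \notin points A ->
  ~~ Cle (mkpair neq_x'y) R && ~~ Cle R (mkpair neq_x'y).
Proof.
move=> anti PA RA neq_RP neq_xy eq_P eq_x' x'nA.
have not_x' Q (z : 'I_m) : Q \in A -> z \in val Q -> z != x.+1 :> nat.
  move=> QA zQ; apply: contraNneq x'nA => eq_z.
  by rewrite (_ : x' = z) ?(mem_points QA zQ) //; apply: val_inj; rewrite /= eq_x' eq_z.
have := not_x' _ _ RA (lo_ord_in R); have := not_x' _ _ RA (hi_ord_in R).
have := not_x' _ y PA; rewrite eq_P !inE eqxx orbT => /(_ isT).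
have [loP hiP] := lohi_set2 neq_xy eq_P.
have [loP' hiP'] := lohi_mkpair neq_x'y.
have neq_PR : P != R by rewrite eq_sym.
have := antichain_nested anti PA RA neq_PR; have := lo_lt_hi R.
rewrite !Cle_pair loP' hiP' /nested loP hiP /= eq_x'; lia.
Qed.

Lemma raise_antichain A (x x' : 'I_m) : antichain A -> x \in points A ->
  x' \notin points A -> x' = x.+1 :> nat ->
  exists P P', [/\ P \in A, P' \notin A, lt_of (@Cle m 2) P P', antichain (P' |: (A :\ P))
    & points (P' |: (A :\ P)) = x' |: (points A :\ x)].
Proof.
move=> anti /bigcupP[P PA xP] x'nA eq_x'.
have [y neq_yx eq_P] := pair_other xP.
have neq_xy : x != y by rewrite eq_sym.
have yA : y \in points A by apply: (mem_points PA); rewrite eq_P !inE eqxx orbT.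
have neq_x'y : x' != y by apply: contraNneq x'nA => ->.
have P'nA : mkpair neq_x'y \notin A.
  by apply: contra x'nA => P'A; apply: (mem_points P'A); rewrite /= !inE eqxx.
exists P, (mkpair neq_x'y); split=> //.
- have [loP hiP] := lohi_set2 neq_xy eq_P; have [loP' hiP'] := lohi_mkpair neq_x'y.
  rewrite /lt_of Cle_pair loP hiP loP' hiP' eq_x'; apply/andP; split; last lia.
  by apply: contraNneq P'nA => <-.
- apply: antichainU1 => [|R /setD1P[neq_RP RA]]; first exact: antichainS (subsetDl _ _) anti.
  exact: raise_pair_incomparable anti PA RA neq_RP neq_xy eq_P eq_x' x'nA.
- rewrite pointsU1 pointsD1 // eq_P; apply/setP => z; rewrite !inE.
  have [-> | _] := eqVneq z x'; first by [].
  have [-> | _] := eqVneq z y; first by rewrite neq_yx yA.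
  by rewrite /= orbF.
Qed.

End CoverSteps.

Section AntichainsOfPairs.
Variables m k : nat.
Notation AT := (Atype (@Cle m 2) k).
Implicit Types A B : AT.
Local Notation pts A := (points (val A)).

Lemma Atype_antichain A : antichain (val A).
Proof. by case/andP: (valP A). Qed.

Lemma Atype_card A : #|val A| = k.
Proof. by case/andP: (valP A) => /eqP. Qed.

Lemma card_points_Atype A : #|pts A| == 2 * k.
Proof. by rewrite card_points ?Atype_antichain // Atype_card. Qed.

Definition union_pairs A : Ctype m (2 * k) := exist _ (pts A) (card_points_Atype A).

Lemma covk_upcount A B : covk A B -> forall z, upcount z (pts A) <= upcount z (pts B).
Proof.
case/existsP => P /existsP[Q /and3P[/eqP/setP eq_AB /eqP/setP eq_BA /andP[_ le_PQ]]] z.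
have inA R : (R \notin val B) && (R \in val A) = (R == P) by have := eq_AB R; rewrite !inE.
have inB R : (R \notin val A) && (R \in val B) = (R == Q) by have := eq_BA R; rewrite !inE.
have PA : P \in val A by have := inA P; rewrite eqxx => /andP[].
have QB : Q \in val B by have := inB Q; rewrite eqxx => /andP[].
apply: (upcount_swap_le _ (Atype_antichain A) (Atype_antichain B) PA QB _ le_PQ).
apply/setP => R; rewrite !inE -inA -inB.
by case: (R \in val A); case: (R \in val B).
Qed.

Lemma lek_upcount A B : lek A B -> forall z, upcount z (pts A) <= upcount z (pts B).
Proof.
case/connectP => p; elim: p A => [|C p IH] A /= => [_ -> // | /andP[cov_AC path_C] eq_B] z.
exact: leq_trans (covk_upcount cov_AC z) (IH C path_C eq_B z).
Qed.

Lemma raise_Atype A (x x' : 'I_m) : x \in pts A -> x' \notin pts A ->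
  x' = x.+1 :> nat ->
  exists A' : AT, covk A A' /\ pts A' = x' |: (pts A :\ x).
Proof.
move=> xA x'nA eq_x'.
have [P [P' [PA P'nA lt_PP' anti' pts']]] := raise_antichain (Atype_antichain A) xA x'nA eq_x'.
have P'nAP : P' \notin val A :\ P by rewrite inE negb_and P'nA orbT.
have anti_k : is_antichain (@Cle m 2) k (P' |: (val A :\ P)).
  apply/andP; split=> //; rewrite cardsU1 P'nAP; apply/eqP.
  by rewrite -[RHS](Atype_card A) (cardsD1 P (val A)) PA.
exists (exist (is_antichain (@Cle m 2) k) _ anti_k); split=> //.
have [out_A in_A'] := setD_swap1 PA P'nA.
by apply/existsP; exists P; apply/existsP; exists P'; rewrite /= out_A in_A' !eqxx.
Qed.

Lemma raise_toward A B :
  (forall z, upcount z (pts A) <= upcount z (pts B)) ->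
  pts A != pts B ->
  exists A' : AT, [/\ covk A A',
    forall z, upcount z (pts A') <= upcount z (pts B) &
    weight (pts A') = (weight (pts A)).+1].
Proof.
move=> le_up neq_pts.
have eq_card : #|pts A| = #|pts B|.
  by rewrite (eqP (card_points_Atype A)) (eqP (card_points_Atype B)).
have [x [x' [xA x'nA eq_x' le_up']]] := exists_raise eq_card le_up neq_pts.
have [A' [cov_AA' pts']] := raise_Atype xA x'nA eq_x'.
by exists A'; rewrite pts' (weight_raise xA x'nA eq_x').
Qed.

Lemma upcount_lek A B :
  (forall z, upcount z (pts A) <= upcount z (pts B)) -> lek A B.
Proof.
move=> le_up; have [n] := ubnP (weight (pts B) - weight (pts A)).
elim: n A le_up => // n IH A le_up lt_n.
have [eq_pts | neq_pts] := eqVneq (pts A) (pts B).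
  suff -> : A = B by apply: connect0.
  by apply/val_inj/points_inj; rewrite ?Atype_antichain.
have [A' [cov_AA' le_up' w_A']] := raise_toward le_up neq_pts.
apply: connect_trans (connect1 cov_AA') (IH A' le_up' _).
have := leq_weight le_up'; rewrite w_A'; lia.
Qed.

Lemma lek_union_pairs A B : lek A B = Cle (union_pairs A) (union_pairs B).
Proof.
apply/idP/idP => [/lek_upcount le_up | /Cle_upcount]; last exact: upcount_lek.
exact/Cle_upcount.
Qed.

Lemma union_pairs_bij : bijective union_pairs.
Proof.
apply: inj_surj_bij => [A B /(congr1 val) /= eq_pts | S].
  by apply/val_inj/points_inj; rewrite ?Atype_antichain.
have [A [antiA cardA ptsA]] := points_surj (eqP (valP S)).
have antiA_k : is_antichain (@Cle m 2) k A by rewrite /is_antichain cardA eqxx.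
by exists (exist (is_antichain (@Cle m 2) k) _ antiA_k); apply: val_inj.
Qed.

Lemma antichains_pairs_iso : poset_iso (@lek _ (@Cle m 2) k) (@Cle m (2 * k)).
Proof. by exists union_pairs; split; [apply: union_pairs_bij | apply: lek_union_pairs]. Qed.

End AntichainsOfPairs.

Lemma card_ord_lt n c : c <= n -> #|[set y : 'I_n | y < c]| = c.
Proof.
move=> le_cn; have widen_inj : injective (widen_ord le_cn) by move=> a b /(congr1 val) /= /val_inj.
rewrite -[RHS](card_ord c) -(card_imset _ widen_inj); apply: eq_card => y.
rewrite inE; apply/idP/imsetP => [lt_yc | [y' _ ->]]; last exact: ltn_ord y'.
by exists (Ordinal lt_yc) => //; apply: val_inj.
Qed.

Lemma mem_downset n (D : {set 'I_n}) : (forall x y : 'I_n, x <= y -> y \in D -> x \in D) ->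
  forall x : 'I_n, (x \in D) = (x < #|D|).
Proof.
move=> down x; apply/idP/idP => [xD | lt_x].
  have /subset_leq_card : [set y : 'I_n | y < x.+1] \subset D.
    by apply/subsetP => y; rewrite inE ltnS => le_yx; apply: down le_yx xD.
  by rewrite card_ord_lt.
apply: contraLR lt_x => xnD; rewrite -leqNgt.
have /subset_leq_card : D \subset [set y : 'I_n | y < x].
  by apply/subsetP => y yD; rewrite inE ltnNge; apply: contra xnD => /down; apply.
by rewrite card_ord_lt // ltnW.
Qed.

Section Ideals.
Variable n : nat.
Implicit Types I : Jtype n.

Definition row (c : 'I_2) I := [set x : 'I_n | (x, c) \in val I].

Lemma ideal_downward I p q : Qle p q -> q \in val I -> p \in val I.
Proof. by move=> le_pq; move/forallP/(_ p)/forallP/(_ q)/implyP/(_ le_pq)/implyP: (valP I). Qed.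

Lemma mem_ideal I (x : 'I_n) (c : 'I_2) : ((x, c) \in val I) = (x < #|row c I|).
Proof.
have -> : ((x, c) \in val I) = (x \in row c I) by rewrite inE.
rewrite mem_downset // => y z le_yz; rewrite !inE.
by apply: ideal_downward; rewrite /Qle /= le_yz leqnn.
Qed.

Lemma card_row_le I c : #|row c I| <= n.
Proof. by rewrite -[n in _ <= n]card_ord max_card. Qed.

Lemma card_row_max_le_row0 I : #|row ord_max I| <= #|row ord0 I|.
Proof.
apply/subset_leq_card/subsetP => x; rewrite !inE.
by apply: ideal_downward; rewrite /Qle /= leqnn.
Qed.

Lemma Jle_card_rows I I' :
  Jle I I' = (#|row ord0 I| <= #|row ord0 I'|) && (#|row ord_max I| <= #|row ord_max I'|).
Proof.
apply/idP/andP => [sub | [le0 le1]].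
  by split; apply/subset_leq_card/subsetP => x; rewrite !inE; apply: (subsetP sub).
apply/subsetP => -[x c]; rewrite !mem_ideal.
have [-> | ->] : c = ord0 \/ c = ord_max.
  by case: c => -[|[|c]] // lt_c; [left | right]; apply: val_inj.
  by move/leq_trans; apply.
by move/leq_trans; apply.
Qed.

Lemma card_row_max_bound I : #|row ord_max I| < n + 2.
Proof. by have := card_row_le I ord_max; lia. Qed.

Lemma card_row0_bound I : #|row ord0 I|.+1 < n + 2.
Proof. by have := card_row_le I ord0; lia. Qed.

Lemma ideal_points_neq I : Ordinal (card_row_max_bound I) != Ordinal (card_row0_bound I).
Proof. by rewrite -val_eqE /= neq_ltn ltnS card_row_max_le_row0. Qed.

Definition ideal_pair I : Ctype (n + 2) 2 := mkpair (ideal_points_neq I).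

Lemma lohi_ideal_pair I :
  lo (ideal_pair I) = #|row ord_max I| /\ hi (ideal_pair I) = #|row ord0 I|.+1.
Proof.
have [-> ->] := lohi_mkpair (ideal_points_neq I); have := card_row_max_le_row0 I.
by rewrite /=; lia.
Qed.

Lemma Jle_ideal_pair I I' : Jle I I' = Cle (ideal_pair I) (ideal_pair I').
Proof.
rewrite Jle_card_rows Cle_pair.
by have [-> ->] := lohi_ideal_pair I; have [-> ->] := lohi_ideal_pair I'; rewrite ltnS andbC.
Qed.

Lemma ideal_pair_surj (P : Ctype (n + 2) 2) : exists I, ideal_pair I = P.
Proof.
have lt_lohi := lo_lt_hi P; have hi_lt := hi_bound P.
pose bound (c : 'I_2) := if c == ord0 then (hi P).-1 else lo P.
pose I0 := [set q : 'I_n * 'I_2 | q.1 < bound q.2].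
have I0_ideal : is_ideal I0.
  apply/forallP => -[x c]; apply/forallP => -[y d]; apply/implyP => /andP[/= le_xy le_cd].
  apply/implyP; rewrite !inE /bound /=.
  by case: c d le_cd => -[|[|?]] ? -[[|[|?]] ?] //=; lia.
have row_I0 c : row c (exist _ I0 I0_ideal) = [set x : 'I_n | x < bound c].
  by apply/setP => x; rewrite !inE.
exists (exist _ I0 I0_ideal); have [eq_lo eq_hi] := lohi_ideal_pair (exist _ I0 I0_ideal).
by apply: lohi_inj; rewrite ?eq_lo ?eq_hi row_I0 card_ord_lt /bound /=; lia.
Qed.

Lemma ideals_pairs_iso : poset_iso (@Jle n) (@Cle (n + 2) 2).
Proof.
exists ideal_pair; split; last exact: Jle_ideal_pair.
apply: inj_surj_bij ideal_pair_surj => I I' eq_II'.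
have le_pair (P : Ctype (n + 2) 2) : Cle P P by rewrite Cle_pair !leqnn.
apply/val_inj/eqP; rewrite eqEsubset.
by rewrite -![_ \subset _]/(Jle _ _) !Jle_ideal_pair eq_II' le_pair.
Qed.

End Ideals.

Unset Implicit Arguments.

Theorem proposition4p1 (n k : nat) :
  (k <= (n + 2)./2)%N ->
  poset_iso (@lek _ (@Jle n) k) (@lek _ (@Cle (n + 2) 2) k) /\
  poset_iso (@lek _ (@Cle (n + 2) 2) k) (@Cle (n + 2) (2 * k)).
Proof.
move=> _; split; first exact: poset_iso_lek (ideals_pairs_iso n).
exact: antichains_pairs_iso.
Qed.
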